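(* Assume the operators $L_r:Lip_d(I)\to Lip_d(I)$, $r\in\mathbb{N}$, are uniformly bounded. Then the non-stationary fractal operator $\mathfrak{F}^\alpha_b:Lip_d(I)\to C(I)$, $\mathfrak{F}^\alpha_b(f)=f^\alpha_b$, is topologically bounded, i.e. it maps bounded sets to bounded sets.
   Context: Setting: $I=[x_0,x_N]$ with partition $\Delta: x_0<x_1<\dots<x_N$, $I_i=[x_{i-1},x_i]$, $l_i:I\to I_i$ the increasing affine bijection $l_i(x)=\frac{x_i-x_{i-1}}{x_N-x_0}x+\frac{x_Nx_{i-1}-x_0x_i}{x_N-x_0}$, and $Q_i=l_i^{-1}$. Scaling functions $\alpha_{i,r}:I\to\mathbb{R}$ ($i=1,\dots,N$, $r\in\mathbb{N}$) are continuous with $\|\alpha\|_\infty:=\sup_{r}\max_i\|\alpha_{i,r}\|_\infty<1$. $Lip_d(I)$ ($0<d\le1$) is the space of real functions $g$ on $I$ with $\sup_{x\ne y}|g(x)-g(y)|/|x-y|^d<\infty$, regarded as a subset of $C(I)$ with the supremum norm. $L_r:Lip_d(I)\to Lip_d(I)$ are operators (not necessarily linear) with $(L_rg)(x_0)=g(x_0)$, $(L_rg)(x_N)=g(x_N)$ for all $g$, and $\sup_r\|L_r\|_\infty<\infty$, where $\|L_r\|_\infty=\sup_{g\ne0}\|L_rg\|_\infty/\|g\|_\infty$. ''Uniformly bounded'' means: for every bounded $S\subset Lip_d(I)$, $\sup_r\sup_{g\in S}\|L_rg\|_\infty<\infty$. Non-stationary $\alpha$-fractal function: for $f\in C(I)$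 and base functions $b_r\in C(I)$ with $b_r(x_0)=f(x_0)$, $b_r(x_N)=f(x_N)$, $\sup_r\|b_r\|_\infty<\infty$, let $C_f(I)=\{g\in C(I):g(x_0)=f(x_0),g(x_N)=f(x_N)\}$ and $T^{\alpha_r}:C_f(I)\to C_f(I)$, $(T^{\alpha_r}g)(x)=f(x)+\alpha_{i,r}(Q_i(x))(g-b_r)(Q_i(x))$ for $x\in I_i$. For every $g\in C_f(I)$, $T^{\alpha_1}\circ\cdots\circ T^{\alpha_r}g$ converges uniformly to a function independent of $g$; this is the non-stationary $\alpha$-fractal function. $f^\alpha_b$ denotes it for $f\in Lip_d(I)$ with $b_r=L_rf$. *)

(* concrete reals R. Functions on I = [x 0, x N] are modelled as
   R -> R; only their values on I matter. *)
From Stdlib Require Import Reals Lra.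
Open Scope R_scope.

Definition inI (a b t : R) : Prop := a <= t <= b.

Definition cont_on (a b : R) (g : R -> R) : Prop :=
  forall t, inI a b t -> forall eps, 0 < eps ->
    exists delta, 0 < delta /\
      forall s, inI a b s -> Rabs (s - t) < delta -> Rabs (g s - g t) < eps.

Definition Lip (d a b : R) (g : R -> R) : Prop :=
  exists M, forall s t, inI a b s -> inI a b t -> s <> t ->
    Rabs (g s - g t) <= M * Rpower (Rabs (s - t)) d.

Definition bnd_on (a b : R) (g : R -> R) (B : R) : Prop :=
  forall t, inI a b t -> Rabs (g t) <= B.

Definition bounded_set (a b : R) (S : (R -> R) -> Prop) : Prop :=
  exists B, forall g, S g -> bnd_on a b g B.

Definition partition (x : nat -> R) (N : nat) : Prop :=
  (1 <= N)%nat /\ forall i, (i < N)%nat -> x i < x (S i).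

(* l_i : I -> I_i, and its inverse Q_i *)
Definition l_aff (x : nat -> R) (N i : nat) (t : R) : R :=
  (x i - x (pred i)) / (x N - x O) * t
  + (x N * x (pred i) - x O * x i) / (x N - x O).
Definition Q_aff (x : nat -> R) (N i : nat) (t : R) : R :=
  x O + (x N - x O) * (t - x (pred i)) / (x i - x (pred i)).

(* seg x n t = the least i in {1,..,n} with t <= x i (n if none);
   for t in I this selects i with t in I_i = [x (i-1), x i]. *)
Fixpoint seg (x : nat -> R) (n : nat) (t : R) : nat :=
  match n with
  | O => 1%nat
  | S m => match m with
           | O => 1%nat
           | _ => if Rle_dec t (x m) then seg x m t else n
           end
  end.

Definition Top (x : nat -> R) (N : nat) (f : R -> R)
  (alpha : nat -> nat -> R -> R) (b : nat -> R -> R) (r : nat)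
  (g : R -> R) : R -> R :=
  fun t => let i := seg x N t in
    f t + alpha i r (Q_aff x N i t) * (g (Q_aff x N i t) - b r (Q_aff x N i t)).

Fixpoint Tcomp (x : nat -> R) (N : nat) (f : R -> R)
  (alpha : nat -> nat -> R -> R) (b : nat -> R -> R) (r : nat)
  (g : R -> R) : R -> R :=
  match r with
  | O => g
  | S r' => Tcomp x N f alpha b r' (Top x N f alpha b (S r') g)
  end.

Definition is_ns_fractal (x : nat -> R) (N : nat) (f : R -> R)
  (alpha : nat -> nat -> R -> R) (b : nat -> R -> R) (phi : R -> R) : Prop :=
  forall g, cont_on (x O) (x N) g -> g (x O) = f (x O) -> g (x N) = f (x N) ->
    forall eps, 0 < eps -> exists R0 : nat, forall r, (R0 <= r)%nat ->
      forall t, inI (x O) (x N) t -> Rabs (Tcomp x N f alpha b r g t - phi t) < eps.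

(* Let s < 1 bound the scaling functions. The map T^{alpha_r} sends the
   sup-norm ball of radius M into itself as soon as |f| + s (M + |b_r|) <= M.
   Uniform boundedness of the L_r gives one bound C for all base functions
   b_r = L_r f with f in a bounded set S (with |f| <= B), so the single radius
   M = (B + s C) / (1 - s) serves every f in S. Starting the iteration from
   the chord of f, which lies in C_f(I) and in that ball, the fractal function
   is a uniform limit of functions bounded by M. *)
From Stdlib Require Import Reals Lra Lia Psatz.
Open Scope R_scope.

Lemma seg_spec (x : nat -> R) n t : (1 <= n)%nat -> x O <= t <= x n ->
  (1 <= seg x n t <= n)%nat /\ x (pred (seg x n t)) <= t <= x (seg x n t).
Proof.
  revert t; induction n as [|m IH]; intros t Hn Ht; [lia|].
  destruct m as [|m'].
  - simpl. split; [lia | exact Ht].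
  - change (seg x (S (S m')) t) with
      (if Rle_dec t (x (S m')) then seg x (S m') t else S (S m')).
    destruct (Rle_dec t (x (S m'))) as [Hle|Hnle].
    + destruct (IH t) as [Hi Hb]; [lia | lra |]. split; [lia | exact Hb].
    + simpl. split; [lia | lra].
Qed.

Lemma partition_first_le x N : partition x N -> forall n, (n <= N)%nat -> x O <= x n.
Proof.
  intros [_ Hx] n; induction n as [|n IH]; intros Hn; [lra|].
  specialize (IH ltac:(lia)). specialize (Hx n ltac:(lia)). lra.
Qed.

Lemma partition_first_lt_last x N : partition x N -> x O < x N.
Proof.
  intros Hp. pose proof Hp as [HN Hx].
  assert (x O <= x (pred N)) by (apply (partition_first_le x N Hp); lia).
  assert (x (pred N) < x (S (pred N))) by (apply Hx; lia).
  replace (S (pred N)) with N in * by lia. lra.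
Qed.

Lemma ratio_in_unit a b t : a < b -> a <= t <= b -> 0 <= (t - a) / (b - a) <= 1.
Proof.
  intros Hab Ht. split.
  - apply Rmult_le_pos; [lra | left; apply Rinv_0_lt_compat; lra].
  - apply Rmult_le_reg_r with (b - a); [lra|]. field_simplify; lra.
Qed.

Lemma Q_aff_inI x N t : partition x N -> inI (x O) (x N) t ->
  (1 <= seg x N t <= N)%nat /\ inI (x O) (x N) (Q_aff x N (seg x N t) t).
Proof.
  intros Hp Ht. pose proof Hp as [HN Hx].
  destruct (seg_spec x N t HN Ht) as [Hi Hseg].
  split; [exact Hi|].
  set (i := seg x N t) in *.
  assert (Hlt : x (pred i) < x i).
  { replace i with (S (pred i)) at 2 by lia. apply Hx. lia. }
  pose proof (partition_first_lt_last x N Hp).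
  pose proof (ratio_in_unit _ _ t Hlt Hseg) as Hw.
  unfold Q_aff, inI, Rdiv in *. rewrite Rmult_assoc. split; nra.
Qed.

Lemma bnd_on_weaken a b g B B' : bnd_on a b g B -> B <= B' -> bnd_on a b g B'.
Proof. intros Hg HB t Ht. specialize (Hg t Ht). lra. Qed.

Lemma bnd_on_nonneg a b g B : a <= b -> bnd_on a b g B -> 0 <= B.
Proof.
  intros Hab Hg. specialize (Hg a ltac:(unfold inI; lra)).
  pose proof (Rabs_pos (g a)). lra.
Qed.

Lemma invariant_radius s B C : 0 <= s < 1 -> 0 <= B -> 0 <= C ->
  exists M, B <= M /\ B + s * (M + C) <= M.
Proof.
  intros Hs HB HC. exists ((B + s * C) / (1 - s)). split.
  - apply Rmult_le_reg_r with (1 - s); [lra|]. field_simplify; nra.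
  - right. field. lra.
Qed.

Section InvariantBall.

Variables (x : nat -> R) (N : nat) (f : R -> R).
Variables (alpha : nat -> nat -> R -> R) (b : nat -> R -> R).
Variables (s C B M : R).
Hypothesis Hpart : partition x N.
Hypothesis Hs : 0 <= s.
Hypothesis Halpha : forall r i, (1 <= r)%nat -> (1 <= i <= N)%nat ->
  bnd_on (x O) (x N) (alpha i r) s.
Hypothesis Hb : forall r, (1 <= r)%nat -> bnd_on (x O) (x N) (b r) C.
Hypothesis Hf : bnd_on (x O) (x N) f B.
Hypothesis HM : B + s * (M + C) <= M.

Lemma Top_bnd r g : (1 <= r)%nat -> bnd_on (x O) (x N) g M ->
  bnd_on (x O) (x N) (Top x N f alpha b r g) M.
Proof.
  intros Hr Hg t Ht. unfold Top.
  destruct (Q_aff_inI x N t Hpart Ht) as [Hi Hq].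
  set (i := seg x N t) in *. set (q := Q_aff x N i t) in *.
  pose proof (Halpha r i Hr Hi q Hq). pose proof (Hb r Hr q Hq).
  pose proof (Hg q Hq). pose proof (Hf t Ht).
  assert (Hdiff : Rabs (g q - b r q) <= M + C).
  { unfold Rminus. eapply Rle_trans; [apply Rabs_triang|]. rewrite Rabs_Ropp. lra. }
  assert (Rabs (alpha i r q) * Rabs (g q - b r q) <= s * (M + C))
    by (apply Rmult_le_compat; auto using Rabs_pos).
  eapply Rle_trans; [apply Rabs_triang|]. rewrite Rabs_mult. lra.
Qed.

Lemma Tcomp_bnd r g : bnd_on (x O) (x N) g M ->
  bnd_on (x O) (x N) (Tcomp x N f alpha b r g) M.
Proof.
  revert g; induction r as [|r IH]; intros g Hg; [exact Hg|].
  apply IH, Top_bnd; [lia | exact Hg].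
Qed.

End InvariantBall.

Lemma cont_on_of_lipschitz a b g k :
  (forall u v, Rabs (g u - g v) <= k * Rabs (u - v)) -> cont_on a b g.
Proof.
  intros Hg t _ eps Heps.
  set (k' := Rabs k + 1).
  assert (Hk' : 0 < k') by (pose proof (Rabs_pos k); unfold k'; lra).
  exists (eps / k'). split; [apply Rdiv_lt_0_compat; lra|].
  intros u _ Hu. specialize (Hg u t).
  assert (Rabs (u - t) * k' < eps).
  { apply Rmult_lt_reg_r with (/ k'); [apply Rinv_0_lt_compat; lra|].
    rewrite Rmult_assoc, Rinv_r by lra. lra. }
  pose proof (Rle_abs k). pose proof (Rabs_pos (u - t)). unfold k' in *. nra.
Qed.

Definition chord (a b : R) (f : R -> R) (u : R) : R :=
  f a + (f b - f a) * ((u - a) / (b - a)).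

Section Chord.

Variables (a b : R) (f : R -> R).
Hypothesis Hab : a < b.

Lemma chord_left : chord a b f a = f a.
Proof. unfold chord. field. lra. Qed.

Lemma chord_right : chord a b f b = f b.
Proof. unfold chord. field. lra. Qed.

Lemma chord_cont : cont_on a b (chord a b f).
Proof.
  apply cont_on_of_lipschitz with (Rabs ((f b - f a) / (b - a))).
  intros u v. right. rewrite <- Rabs_mult. f_equal. unfold chord. field. lra.
Qed.

Lemma chord_bnd B : bnd_on a b f B -> bnd_on a b (chord a b f) B.
Proof.
  intros Hf u Hu.
  pose proof (ratio_in_unit a b u Hab Hu) as Hw.
  set (w := (u - a) / (b - a)) in *.
  replace (chord a b f u) with ((1 - w) * f a + w * f b) by (unfold chord; fold w; ring).
  pose proof (Hf a ltac:(unfold inI; lra)). pose proof (Hf b ltac:(unfold inI; lra)).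
  eapply Rle_trans; [apply Rabs_triang|].
  rewrite !Rabs_mult, (Rabs_pos_eq w), (Rabs_pos_eq (1 - w)) by lra. nra.
Qed.

End Chord.

Lemma is_ns_fractal_bnd x N f alpha b phi g M :
  is_ns_fractal x N f alpha b phi ->
  cont_on (x O) (x N) g -> g (x O) = f (x O) -> g (x N) = f (x N) ->
  (forall r, bnd_on (x O) (x N) (Tcomp x N f alpha b r g) M) ->
  bnd_on (x O) (x N) phi (M + 1).
Proof.
  intros Hphi Hg Hg0 HgN HT t Ht.
  destruct (Hphi g Hg Hg0 HgN 1 Rlt_0_1) as [R0 HR0].
  specialize (HR0 R0 (le_n _) t Ht). specialize (HT R0 t Ht).
  set (T := Tcomp x N f alpha b R0 g t) in *.
  replace (phi t) with (T - (T - phi t)) by ring.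
  unfold Rminus at 1. eapply Rle_trans; [apply Rabs_triang|].
  rewrite Rabs_Ropp. lra.
Qed.

Theorem mainTheorem5
  (x : nat -> R) (N : nat) (d : R)
  (alpha : nat -> nat -> R -> R) (L : nat -> (R -> R) -> (R -> R))
  (Hpart : partition x N)
  (Hd : 0 < d <= 1)
  (* scaling functions: continuous on I, with ||alpha||_oo < 1 *)
  (Halpha_cont : forall r i, (1 <= r)%nat -> (1 <= i <= N)%nat ->
      cont_on (x O) (x N) (alpha i r))
  (Halpha_bnd : exists s, s < 1 /\ forall r i, (1 <= r)%nat -> (1 <= i <= N)%nat ->
      bnd_on (x O) (x N) (alpha i r) s)
  (* L_r : Lip_d(I) -> Lip_d(I), preserving endpoint values *)
  (HL_Lip : forall r g, (1 <= r)%nat -> Lip d (x O) (x N) g -> Lip d (x O) (x N) (L r g))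
  (HL_end : forall r g, (1 <= r)%nat -> Lip d (x O) (x N) g ->
      L r g (x O) = g (x O) /\ L r g (x N) = g (x N))
  (* sup_r ||L_r||_oo < oo *)
  (HL_norm : exists K, forall r g, (1 <= r)%nat -> Lip d (x O) (x N) g ->
      (exists t, inI (x O) (x N) t /\ g t <> 0) ->
      forall B, bnd_on (x O) (x N) g B -> bnd_on (x O) (x N) (L r g) (K * B))
  (* the L_r are uniformly bounded *)
  (HL_unif : forall S : (R -> R) -> Prop,
      (forall g, S g -> Lip d (x O) (x N) g) -> bounded_set (x O) (x N) S ->
      exists C, forall r g, (1 <= r)%nat -> S g -> bnd_on (x O) (x N) (L r g) C) :
  forall S : (R -> R) -> Prop,
    (forall f, S f -> Lip d (x O) (x N) f) -> bounded_set (x O) (x N) S ->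
    exists M, forall f phi, S f -> is_ns_fractal x N f alpha (fun r => L r f) phi ->
      bnd_on (x O) (x N) phi M.
Proof.
  intros S HS [B HB].
  destruct Halpha_bnd as [s [Hs1 Halpha]].
  destruct (HL_unif S HS (ex_intro _ B HB)) as [C HC].
  pose proof (partition_first_lt_last x N Hpart) as H0N.
  assert (Hs0 : 0 <= s).
  { destruct Hpart as [HN _].
    exact (bnd_on_nonneg _ _ _ _ (Rlt_le _ _ H0N) (Halpha 1%nat 1%nat ltac:(lia) ltac:(lia))). }
  destruct (invariant_radius s (Rabs B) (Rabs C)) as [M [HBM HM]];
    auto using Rabs_pos.
  exists (M + 1). intros f phi Sf Hphi.
  assert (Hf : bnd_on (x O) (x N) f (Rabs B))
    by (apply bnd_on_weaken with B; [apply HB, Sf | apply Rle_abs]).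
  apply (is_ns_fractal_bnd _ _ _ _ _ _ (chord (x O) (x N) f) _ Hphi).
  - exact (chord_cont _ _ f H0N).
  - exact (chord_left _ _ f H0N).
  - exact (chord_right _ _ f H0N).
  - intros r. apply (Tcomp_bnd x N f alpha _ s (Rabs C) (Rabs B)); auto.
    + intros r' Hr'. apply bnd_on_weaken with C; [apply HC; auto | apply Rle_abs].
    + apply (bnd_on_weaken _ _ _ _ _ (chord_bnd _ _ f H0N _ Hf) HBM).
Qed.
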